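(* Let $\theta\in k$, let $\mathcal D$ be a set, let $RB$ be the free Rota--Baxter algebra of weight $\theta$ on $\mathcal D$ with Rota--Baxter map $R$, and let $\iota:GL\to RB$ be the canonical embedding of the Grossman--Larson algebra (the linear map with $\iota(e)=\mathbf 1$, sending the one-vertex tree decorated by $d$ to $d$, sending grafting of trees to $\triangleleft_\theta$ and the Grossman--Larson product of nonempty forests to $\ast_\theta$). Then for all $b_1,\ldots,b_n\in\mathcal D$ (viewed as one-vertex trees), the image of their commutative (forest) product is $$ \iota(b_1\cdots b_n)=\sum_{\sigma\in S_n}R\Big(\cdots R\big(R(b_{\sigma(1)})b_{\sigma(2)}\big)\cdots\Big)b_{\sigma(n)}. $$
   Context: $k$ is a field of characteristic zero. A Rota--Baxter algebra of weight $\theta$ is a unital associative algebra $A$ with linear $R:A\to A$ satisfying $R(x)R(y)=R(R(x)y+xR(y))+\theta R(xy)$. On it, $a\triangleleft_\theta b:=aR(b)-R(b)a+\theta ab$ and $a\ast_\theta b:=R(a)b+aR(b)+\theta ab$. Grossman--Larson algebra $GL$: $\mathcal T$ is the span of $\mathcal D$-decorated rooted trees with grafting $t\curvearrowleft t'$ (sum over vertices $v$ of $t$ of the tree obtained by joining $v$ to the root of $t'$), the free right pre-Lie algebra on $\mathcal D$; $GL=S(\mathcal T)$ is the span of forests (commutative monomials in trees, unit the empty forest $e$). Forests act on trees by $t\curvearrowleft e=t$, $t\curvearrowleft(t_1\cdots t_n)=(t\curvearrowleft(t_1\cdots t_{n-1}))\curvearrowleft t_n-\sum_{i=1}^{n-1}t\curvearrowleft(t_1\cdots(t_i\curvearrowleft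 t_n)\cdots t_{n-1})$, and the Grossman--Larson product is $(t_1\cdots t_n)\ast(t'_1\cdots t'_m)=\sum_f F_0(t_1\curvearrowleft F_1)\cdots(t_n\curvearrowleft F_n)$ over maps $f:\{1..m\}\to\{0..n\}$, $F_i=\prod_{j\in f^{-1}(i)}t'_j$. The map $\iota$ is well defined and injective. *)

From HB Require Import structures.
From mathcomp Require Import all_boot all_order all_algebra all_fingroup.
Set Implicit Arguments. Unset Strict Implicit. Unset Printing Implicit Defensive.
Import GRing.Theory.
Local Open Scope ring_scope.

Definition is_RB (k : fieldType) (A : algType k) (theta : k)
    (R : {linear A -> A}) : Prop :=
  forall x y : A, R x * R y = R (R x * y + x * R y) + theta *: R (x * y).

Definition rb_tri (k : fieldType) (A : algType k) (theta : k)
    (R : {linear A -> A}) (a b : A) : A :=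
  a * R b - R b * a + theta *: (a * b).

Definition rb_star (k : fieldType) (A : algType k) (theta : k)
    (R : {linear A -> A}) (a b : A) : A :=
  R a * b + a * R b + theta *: (a * b).

Definition free_RB (k : fieldType) (theta : k) (D : Type) (A : algType k)
    (R : {linear A -> A}) (i : D -> A) : Prop :=
  is_RB theta R /\
  forall (B : algType k) (P : {linear B -> B}), is_RB theta P ->
  forall f : D -> B,
    exists phi : {lrmorphism A -> B},
      [/\ (forall x, phi (R x) = P (phi x)),
          (forall d, phi (i d) = f d) &
          (forall psi : {lrmorphism A -> B},
             (forall x, psi (R x) = P (psi x)) ->
             (forall d, psi (i d) = f d) -> forall x, psi x = phi x)].

(* A tree is represented by a planar representative Node d children;   *)
(* a forest (commutative monomial of trees) by a list of trees.        *)
(* Isomorphism of (unordered) trees/forests is [teq]/[feq].            *)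

Inductive tree (D : Type) : Type := Node of D & seq (tree D).
Arguments Node {D}.

Definition forest (D : Type) := seq (tree D).

Inductive teq {D : Type} : tree D -> tree D -> Prop :=
| teq_node d cs cs' : feq cs cs' -> teq (Node d cs) (Node d cs')
with feq {D : Type} : seq (tree D) -> seq (tree D) -> Prop :=
| feq_nil : feq [::] [::]
| feq_cons t t' s s' : teq t t' -> feq s s' -> feq (t :: s) (t' :: s')
| feq_swap t t' s : feq (t :: t' :: s) (t' :: t :: s)
| feq_trans s1 s2 s3 : feq s1 s2 -> feq s2 s3 -> feq s1 s3.

Definition leaf {D : Type} (d : D) : tree D := Node d [::].

(* Grafting t <~ t' : the list (formal sum, coefficients 1) over the
   vertices v of t of the tree obtained by joining v to the root of t'. *)
Fixpoint graft {D : Type} (t t' : tree D) : seq (tree D) :=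
  match t with
  | Node d cs =>
      Node d (rcons cs t') ::
      (fix go (pre cs : seq (tree D)) : seq (tree D) :=
         match cs with
         | [::] => [::]
         | c :: cs' =>
             [seq Node d (pre ++ c' :: cs') | c' <- graft c t']
               ++ go (rcons pre c) cs'
         end) [::] cs
  end.

(* Action of forests on trees, following the recursive definition
   t <~ e = t,
   t <~ (t1..tn) = (t <~ (t1..t_{n-1})) <~ tn
                   - sum_{i<n} t <~ (t1..(ti <~ tn)..t_{n-1}),
   extended multilinearly.  Results are formal integer combinations. *)
Fixpoint act_aux {D : Type} (fuel : nat) (t : tree D) (F : forest D)
    : seq (int * tree D) :=
  match fuel with
  | 0 => [:: (1%Z, t)]
  | fuel'.+1 =>
      if F is [::] then [:: (1%Z, t)] else
      let n := size F in
      let F0 := take n.-1 F in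
      let tn := last t F in
      [seq (p.1, v) | p <- act_aux fuel' t F0, v <- graft p.2 tn]
      ++ [seq ((- q.1)%R, q.2)
         | i <- iota 0 n.-1,
           q <- flatten [seq act_aux fuel' t (set_nth t F0 i u)
                        | u <- graft (nth t F0 i) tn]]
  end.

Definition act {D : Type} (t : tree D) (F : forest D) : seq (int * tree D) :=
  act_aux (size F) t F.

Fixpoint prodexp {D : Type} (s : seq (seq (int * tree D)))
    : seq (int * forest D) :=
  match s with
  | [::] => [:: (1%Z, [::])]
  | x :: rest =>
      [seq ((p.1 * q.1)%R, p.2 :: q.2) | p <- x, q <- prodexp rest]
  end.

(* all maps f : {1..m} -> {0..n}, as sequences of length m *)
Fixpoint maps_to (m n : nat) : seq (seq nat) :=
  match m with
  | 0 => [:: [::]]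
  | m'.+1 => [seq i :: f | i <- iota 0 n.+1, f <- maps_to m' n]
  end.

(* Grossman--Larson product of forests:
   (t1..tn) * (t'1..t'm) = sum_f F_0 (t1 <~ F_1)...(tn <~ F_n),
   F_i = prod_{j in f^-1(i)} t'_j. *)
Definition glprod {D : Type} (F F' : forest D) : seq (int * forest D) :=
  flatten
    [seq let Fi := fun i => [seq p.2 | p <- zip f F' & p.1 == i] in
         [seq (q.1, Fi 0%N ++ q.2)
         | q <- prodexp [seq act p.2 (Fi p.1) | p <- zip (iota 1 (size F)) F]]
    | f <- maps_to (size F') (size F)].

Definition linF {D : Type} {V : zmodType} (f : forest D -> V)
    (s : seq (int * forest D)) : V :=
  \sum_(p <- s) f p.2 *~ p.1.

Definition is_GL_embedding (k : fieldType) (theta : k) (D : Type)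
    (A : algType k) (R : {linear A -> A}) (i : D -> A)
    (iota : forest D -> A) : Prop :=
  [/\ (forall F F', feq F F' -> iota F = iota F'),
      iota [::] = 1,
      (forall d, iota [:: leaf d] = i d),
      (forall t t' : tree D,
         \sum_(u <- graft t t') iota [:: u] = rb_tri theta R (iota [:: t]) (iota [:: t'])) &
      (forall F F' : forest D, F <> [::] -> F' <> [::] ->
         linF iota (glprod F F') = rb_star theta R (iota F) (iota F'))].

Definition rb_word (k : fieldType) (A : algType k) (R : {linear A -> A})
    (xs : seq A) : A :=
  if xs is x :: rest then foldl (fun acc y => R acc * y) x rest else 1.

(* For a map x from indices to A, let S_m(x) = symword R m x be the sum over all orderings of
   x_0, ..., x_(m-1) of the iterated words R(...R(R(x_s0) x_s1)...) x_s(m-1);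
   splitting permutations by their last value, S_(m+1)(x) is the sum over j of
   R(S_m(x without x_j)) x_j.  It therefore suffices to show that iota sends a
   forest t_0 ... t_m to S_(m+1)(iota t_0, ..., iota t_m), by induction on m.
   The Grossman--Larson product of a forest F with one more tree t is t F plus
   the sum of all forests obtained by grafting t onto one tree of F, so
   iota(t F) = iota F *_theta iota t - sum_j iota(F with t_j replaced by
   t_j <| t).  The symmetrised words satisfy the same recursion, because the
   Rota--Baxter identity says exactly R(a *_theta b) = R a R b. *)

From Pilot Require Import Defs.
From HB Require Import structures.
From mathcomp Require Import all_boot all_order all_algebra all_fingroup.
From mathcomp Require Import zify.
Set Implicit Arguments. Unset Strict Implicit. Unset Printing Implicit Defensive.
Import GRing.Theory.
Local Open Scope ring_scope.

Local Notation upd x j v := (@dfwith _ _ x j v).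

Lemma upd_bump (T : Type) (x : nat -> T) i j v i' : i != j ->
  upd x j v (bump i i') = upd (x \o bump i) (unbump i j) v i'.
Proof.
move=> neq_ij; have [<-|neq_j] := eqVneq (unbump i j) i'.
  by rewrite unbumpK ?inE 1?eq_sym // !dfwith_in.
by rewrite !dfwith_out //; apply: contra neq_j => /eqP->; rewrite bumpK.
Qed.

Lemma upd_bump_eq (T : Type) (x : nat -> T) j v i' :
  upd x j v (bump j i') = x (bump j i').
Proof. by rewrite dfwith_out // neq_bump. Qed.

Lemma unbump_lt m i j : (i < m.+1)%N -> (j < m.+1)%N -> i != j -> (unbump i j < m)%N.
Proof. by move=> lt_i lt_j /eqP neq_ij; rewrite /unbump; case: ltnP => /=; lia. Qed.

Section SymmetrizedWord.
Variables (A : pzRingType) (R : {additive A -> A}).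

Fixpoint symword (m : nat) (x : nat -> A) : A :=
  match m with
  | 0 => 1
  | 1 => x 0%N (* not R 1 * x 0 *)
  | m'.+1 => \sum_(j < m) R (symword m' (x \o bump j)) * x j
  end.

Arguments symword : simpl never.

Lemma symword1 x : symword 1 x = x 0%N.
Proof. by []. Qed.

Lemma symwordS m x :
  symword m.+2 x = \sum_(j < m.+2) R (symword m.+1 (x \o bump j)) * x j.
Proof. by []. Qed.

Lemma eq_symword m x y :
  (forall i, (i < m)%N -> x i = y i) -> symword m x = symword m y.
Proof.
elim: m x y => [|[|m] IH] x y eq_xy //; first by rewrite !symword1 eq_xy.
rewrite !symwordS; apply: eq_bigr => j _; rewrite eq_xy //; congr (R _ * _).
by apply: IH => i lt_im; apply: eq_xy; rewrite /bump; lia.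
Qed.

Lemma symword_updD m (x : nat -> A) j (a b : A) : (j < m)%N ->
  symword m (upd x j (a + b)) = symword m (upd x j a) + symword m (upd x j b).
Proof.
elim: m x j => [|[|m] IH] x j lt_jm //.
  by move: lt_jm; rewrite ltnS leqn0 => /eqP->; rewrite !symword1 !dfwith_in.
rewrite !symwordS -big_split; apply: eq_bigr => i _.
have [<-|neq_ij] := eqVneq (nat_of_ord i) j.
  rewrite !dfwith_in mulrDr; congr (R _ * _ + R _ * _);
  by apply: eq_symword => i' _; rewrite /= !upd_bump_eq.
have upd_comp v i' : (i' < m.+1)%N ->
    (upd x j v \o bump i) i' = upd (x \o bump i) (unbump i j) v i'.
  by move=> _; rewrite /= upd_bump.
rewrite !dfwith_out 1?eq_sym // !(eq_symword (upd_comp _)).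
by rewrite IH ?unbump_lt // raddfD mulrDl.
Qed.

Lemma symword_upd_sum m (x : nat -> A) j (T : Type) (s : seq T) (f : T -> A) :
  (j < m)%N ->
  symword m (upd x j (\sum_(u <- s) f u)) = \sum_(u <- s) symword m (upd x j (f u)).
Proof.
move=> lt_jm; elim: s => [|u s IH]; last by rewrite !big_cons symword_updD // IH.
have upd00 := symword_updD x 0 0 lt_jm; rewrite addr0 in upd00.
by rewrite !big_nil; apply: (addrI (symword m (upd x j 0))); rewrite addr0 -upd00.
Qed.

Lemma symword_upd_last m (x : nat -> A) (y : A) :
  symword m.+2 (upd x m.+1 y) = R (symword m.+1 x) * y
    + \sum_(i < m.+1) R (symword m.+1 (upd (x \o bump i) m y)) * x i.
Proof.
rewrite symwordS big_ord_recr /= addrC; congr (_ + _).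
  rewrite dfwith_in; congr (R _ * _); apply: eq_symword => i lt_im.
  by rewrite /= /bump leqNgt lt_im add0n dfwith_out // gtn_eqF.
apply: eq_bigr => i _; rewrite dfwith_out ?gtn_eqF //; congr (R _ * _).
apply: eq_symword => i' _; rewrite /= upd_bump ?ltn_eqF //.
by rewrite /unbump ltn_ord subn1.
Qed.

Lemma sum_symword_upd m (x g : nat -> A) :
  \sum_(j < m.+2) symword m.+2 (upd x j (g j))
  = \sum_(i < m.+2) (R (symword m.+1 (x \o bump i)) * g i
      + R (\sum_(j < m.+1) symword m.+1 (upd (x \o bump i) j (g (bump i j)))) * x i).
Proof.
under eq_bigr do rewrite symwordS.
rewrite exchange_big; apply: eq_bigr => i _; rewrite (bigD1_ord i) //=; congr (_ + _).
  by rewrite dfwith_in; congr (R _ * _); apply: eq_symword => i' _; apply: upd_bump_eq.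
rewrite raddf_sum mulr_suml; apply: eq_bigr => j _ /=.
rewrite dfwith_out 1?eq_sym ?neq_bump //; congr (R _ * _); apply: eq_symword => i' _.
by rewrite /= upd_bump ?neq_bump // (bumpK i j).
Qed.

End SymmetrizedWord.

Arguments symword {A} R m x : simpl never.

Section RotaBaxterIdentity.
Variables (k : fieldType) (A : algType k) (theta : k) (R : {linear A -> A}).
Hypothesis RB_R : is_RB theta R.

Lemma R_rb_star a b : R (rb_star theta R a b) = R a * R b.
Proof. by rewrite RB_R /rb_star raddfD; congr (_ + _); apply: linearZZ. Qed.

Lemma symword_rb_star n (x : nat -> A) (y : A) :
  symword R n.+2 (upd x n.+1 y)
    + \sum_(j < n.+1) symword R n.+1 (upd x j (rb_tri theta R (x j) y))
  = rb_star theta R (symword R n.+1 x) y.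
Proof.
elim: n x => [|n IH] x.
  rewrite symwordS !big_ord_recr !big_ord0 /= !symword1 /bump /=.
  rewrite !dfwith_in !dfwith_out // /rb_tri /rb_star !add0r [X in X + _ = _]addrC.
  by rewrite -!addrA; congr (_ + _); rewrite addrCA addNKr.
rewrite symword_upd_last (sum_symword_upd R n x (fun j => rb_tri theta R (x j) y)).
rewrite [in RHS]/rb_star -!addrA; congr (_ + _).
rewrite [symword R n.+2 x]symwordS !mulr_suml scaler_sumr -!big_split.
apply: eq_bigr => i _ /=; set xi := x \o bump i.
have sum_tri : \sum_(j < n.+1) symword R n.+1 (upd xi j (rb_tri theta R (xi j) y))
    = rb_star theta R (symword R n.+1 xi) y - symword R n.+2 (upd xi n.+1 y).
  by rewrite -(IH xi) addrAC subrr add0r.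
rewrite sum_tri linearB /= R_rb_star mulrBl /rb_tri mulrDr mulrBr -scalerAr !mulrA.
set a := R (symword R n.+2 _) * x i.
by rewrite addrCA (addrCA a) subrr addr0 addrAC subrK.
Qed.

End RotaBaxterIdentity.

Lemma sum_perm_lift (V : nmodType) n (i0 j0 : 'I_n.+1) (g : 'S_n.+1 -> V) :
  \sum_(s : 'S_n.+1 | s i0 == j0) g s = \sum_(s : 'S_n) g (lift_perm i0 j0 s).
Proof.
rewrite (reindex (lift_perm i0 j0)); last first.
  pose unlift_perm_fun i (s : 'S_n.+1) k := odflt k (unlift (s i) (s (lift i k))).
  have unlift_perm_funK i (s : 'S_n.+1) k : lift (s i) (unlift_perm_fun i s k) = s (lift i k).
    rewrite /unlift_perm_fun; have := neq_lift i k.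
    by rewrite -(can_eq (permK s)) => /unlift_some[] ? ? ->.
  have unlift_perm_fun_inj : injective (unlift_perm_fun i0 _).
    move=> s; apply: can_inj (unlift_perm_fun (s i0) s^-1%g) _ => k.
    by rewrite {1}/unlift_perm_fun unlift_perm_funK !permK liftK.
  exists (fun s => perm (unlift_perm_fun_inj s)) => [s _ | s].
    by apply/permP => k; rewrite permE /unlift_perm_fun lift_perm_lift lift_perm_id liftK.
  move/(s _ =P _) => s_i0; apply/permP => k.
  case: (unliftP i0 k) => [k'|] ->; rewrite ?lift_perm_id //.
  by rewrite lift_perm_lift -s_i0 permE unlift_perm_funK.
by apply: eq_bigl => s; rewrite lift_perm_id eqxx.
Qed.

Section PermutationSum.
Variables (k : fieldType) (A : algType k) (R : {linear A -> A}).

Lemma rb_word_rcons xs y : xs != [::] -> rb_word R (rcons xs y) = R (rb_word R xs) * y.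
Proof. by case: xs => [//|x xs] _; rewrite /= foldl_rcons. Qed.

Lemma sum_perm_rb_word m (f : 'I_m.+1 -> A) :
  \sum_(s : 'S_m.+1) rb_word R [seq f (s j) | j <- enum 'I_m.+1]
  = symword R m.+1 (fun i => f (inord i)).
Proof.
elim: m f => [|m IH] f.
  have -> : enum 'I_1 = [:: ord0] by apply: (inj_map val_inj); rewrite val_enum_ord.
  rewrite symword1 (eq_bigr (fun _ => f ord0)) => [|s _]; last by rewrite /= (ord1 (s ord0)).
  by rewrite sumr_const card_Sn /=; congr f; apply: val_inj; rewrite /= inordK.
rewrite symwordS enum_ordSr (partition_big (fun s : 'S_m.+2 => s ord_max) xpredT) //=.
apply: eq_bigr => j _; rewrite sum_perm_lift inord_val.
rewrite (@eq_symword _ R _ _ (fun i => f (lift j (inord i)))); last first.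
  move=> i lt_im; congr f; apply: val_inj; rewrite /= !inordK //.
  exact: (@lift_subproof m.+2 j (Ordinal lt_im)).
rewrite -(IH (f \o lift j)) linear_sum mulr_suml; apply: eq_bigr => s _.
rewrite map_rcons rb_word_rcons; last by rewrite -size_eq0 !size_map -enumT size_enum_ord.
rewrite lift_perm_id -map_comp; congr (R (rb_word R _) * _); apply: eq_map => i /=.
have -> : widen_ord (leqnSn m.+1) i = lift ord_max i.
  by apply: val_inj; rewrite /= /bump leqNgt ltn_ord.
by rewrite lift_perm_lift.
Qed.

End PermutationSum.

Section GrossmanLarson.
Variable D : Type.
Implicit Types (t u : tree D) (F : forest D).

Lemma act_nil t : Defs.act t [::] = [:: (1%Z, t)].
Proof. by []. Qed.

Lemma act_tree t u : Defs.act t [:: u] = [seq (1%Z, v) | v <- graft t u].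
Proof. by rewrite /Defs.act /= !cats0. Qed.

Lemma prodexp_act_at t F c l :
  prodexp [seq Defs.act p.2 (if l == p.1 then [:: t] else [::])
          | p <- zip (iota c (size F)) F]
  = if (c <= l < c + size F)%N
    then [seq (1%Z, set_nth t F (l - c) u) | u <- graft (nth t F (l - c)) t]
    else [:: (1%Z, F)].
Proof.
elim: F c => [|u F IH] c /=; first by rewrite addn0 ltnNge andbN.
rewrite IH; have [->|neq_lc] := eqVneq l c.
  rewrite act_tree ltnn /= addnS leqnn ltnS leq_addr subnn /=.
  by elim: (graft u t) => //= v s ->.
rewrite act_nil /= (cats0 (_ : seq (int * forest D))).
have -> : (c < l < c.+1 + size F)%N = (c <= l < c + (size F).+1)%N.
  by rewrite addSn addnS ltn_neqAle eq_sym neq_lc.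
case: ifP => // /andP[le_cl _]; rewrite -map_comp.
have -> : (l - c = (l - c.+1).+1)%N by move/eqP: neq_lc; lia.
by apply: eq_map => v /=; rewrite mul1r.
Qed.

Lemma linF_glprod_tree (V : zmodType) (f : forest D -> V) F t :
  linF f (glprod F [:: t]) = f (t :: F)
    + \sum_(j < size F) \sum_(u <- graft (nth t F j) t) f (set_nth t F j u).
Proof.
have sel l : [seq Defs.act p.2 [seq q.2 | q <- zip [:: l] [:: t] & q.1 == p.1]
             | p <- zip (iota 1 (size F)) F]
    = [seq Defs.act p.2 (if l == p.1 then [:: t] else [::])
      | p <- zip (iota 1 (size F)) F].
  by apply: eq_map => p /=; case: (l == p.1).
have maps_to1 : maps_to 1 (size F) = [seq [:: l] | l <- iota 0 (size F).+1].
  by rewrite /=; congr cons; elim: (iota 1 _) => //= l s ->.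
rewrite /linF /glprod [size [:: t]]/= maps_to1 big_flatten -map_comp big_map.
rewrite (eq_bigr (fun l =>
    \sum_(q <- prodexp [seq Defs.act p.2 (if l == p.1 then [:: t] else [::])
                       | p <- zip (iota 1 (size F)) F])
      f ((if l == 0%N then [:: t] else [::]) ++ q.2) *~ q.1)); last first.
  by move=> l _; rewrite /comp sel big_map; apply: eq_bigr => q _ /=; case: (l == 0%N).
rewrite [iota 0 _]/= big_cons (prodexp_act_at t F 1 0) /= big_seq1 mulr1z; congr (_ + _).
rewrite {1}(iotaDl 1 0) big_map -(big_mkord xpredT
  (fun j => \sum_(u <- graft (nth t F j) t) f (set_nth t F j u))) /index_iota subn0.
rewrite !big_seq; apply: eq_bigr => j; rewrite mem_iota add0n => lt_jF.
rewrite (prodexp_act_at t F 1 (1 + j)) add1n ltnS lt_jF /= subSS subn0 big_map.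
by apply: eq_bigr => u _; rewrite /= mulr1z.
Qed.

Fixpoint teq_refl t : teq t t :=
  let: Node d cs := t in
  teq_node d ((fix feq_refl_children (s : seq (tree D)) : feq s s :=
                 if s is c :: s' then feq_cons (teq_refl c) (feq_refl_children s')
                 else feq_nil) cs).

Lemma feq_rot t F : feq (t :: F) (rcons F t).
Proof.
elim: F => [|u F IH] /=; first exact: feq_cons (teq_refl t) feq_nil.
exact: feq_trans (feq_swap t u F) (feq_cons (teq_refl u) IH).
Qed.

End GrossmanLarson.

Section Embedding.
Variables (k : fieldType) (theta : k) (D : Type) (A : algType k).
Variables (R : {linear A -> A}) (i : D -> A) (io : forest D -> A).
Hypotheses (RB_R : is_RB theta R) (GL_io : is_GL_embedding theta R i io).

Lemma GL_embedding_symword m (F : forest D) (t0 : tree D) :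
  size F = m.+1 -> io F = symword R m.+1 (fun j => io [:: nth t0 F j]).
Proof.
case: GL_io => io_feq _ _ io_graft io_glprod.
elim: m F t0 => [|m IH] F t0 size_F.
  by rewrite symword1; case: F size_F => [|t [|]].
case/lastP: F size_F => [//|F t]; rewrite size_rcons => -[size_F].
pose x j := io [:: nth t F j]; pose y := io [:: t].
have io_F : io F = symword R m.+1 x by apply: IH.
have io_graft_sum :
    \sum_(j < size F) \sum_(u <- graft (nth t F j) t) io (set_nth t F j u)
    = \sum_(j < m.+1) symword R m.+1 (upd x j (rb_tri theta R (x j) y)).
  rewrite size_F; apply: eq_bigr => j _.
  rewrite -io_graft symword_upd_sum //; apply: eq_bigr => u _.
  rewrite (IH _ t); last by rewrite size_set_nth size_F; apply/maxn_idPr.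
  apply: eq_symword => j' _; rewrite nth_set_nth /=.
  by have [->|neq_j] := eqVneq j' j; rewrite ?dfwith_in // dfwith_out 1?eq_sym.
have io_cons : io (t :: F) = symword R m.+2 (upd x m.+1 y).
  have : linF io (glprod F [:: t]) = rb_star theta R (io F) (io [:: t]).
    by apply: io_glprod => // F_nil; rewrite F_nil in size_F.
  by rewrite linF_glprod_tree io_graft_sum io_F -symword_rb_star // => /addIr.
rewrite -(io_feq _ _ (feq_rot t F)) io_cons; apply: eq_symword => j lt_jm.
rewrite nth_rcons size_F; case: ltnP => [lt_j | ge_j].
  by rewrite dfwith_out ?gtn_eqF // /x (set_nth_default t0) ?size_F.
have -> : j = m.+1 by apply/eqP; rewrite eqn_leq ge_j -ltnS lt_jm.
by rewrite eqxx dfwith_in.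
Qed.

End Embedding.

Theorem theorem3p5 (k : fieldType) (hk : [pchar k] =i pred0) (theta : k)
    (D : Type) (A : algType k) (R : {linear A -> A}) (i : D -> A)
    (hfree : free_RB theta R i)
    (iota : forest D -> A) (hiota : is_GL_embedding theta R i iota)
    (n : nat) (b : 'I_n.+1 -> D) :
  iota [seq leaf (b j) | j <- enum 'I_n.+1]
  = \sum_(s : 'S_n.+1) rb_word R [seq i (b (s j)) | j <- enum 'I_n.+1].
Proof.
have RB_R : is_RB theta R by case: hfree.
have [_ _ iota_leaf _ _] := hiota.
rewrite (sum_perm_rb_word R (i \o b)).
rewrite (GL_embedding_symword RB_R hiota (m := n) (leaf (b ord0))); last first.
  by rewrite size_map size_enum_ord.
apply: eq_symword => j lt_jn.
rewrite (nth_map ord0) ?size_enum_ord // iota_leaf; congr (i (b _)).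
by apply: val_inj; rewrite /= nth_enum_ord // inordK.
Qed.
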